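(* Let $P$ be a pre-meadow with $\mathbf{a}$. The following are equivalent: (1) for all $0\cdot z,0\cdot w\in 0\cdot P$ with $0\cdot z\le 0\cdot w$, the transition map $f_{0\cdot w,0\cdot z}:P_{0\cdot w}\to P_{0\cdot z}$ is surjective; (2) for all $0\cdot z\in 0\cdot P$, the transition map $f_{0,0\cdot z}:P_0\to P_{0\cdot z}$ is surjective.
   Context: A pre-meadow is a structure $(P,+,-,\cdot,0,1)$ satisfying: $(x+y)+z=x+(y+z)$, $x+y=y+x$, $x+0=x$, $x+(-x)=0\cdot x$, $(xy)z=x(yz)$, $xy=yx$, $1\cdot x=x$, $x(y+z)=xy+xz$, $-(-x)=x$, $0\cdot(x+y)=0\cdot x\cdot y$. For $z\in 0\cdot P$ put $P_z:=\{x\in P\mid 0\cdot x=z\}$. $P$ is a pre-meadow with $\mathbf{a}$ if there is a unique $z\in 0\cdot P$ with $|P_z|=1$, denoted $\mathbf{a}$, and $x+\mathbf{a}=\mathbf{a}$ for all $x\in P$. Each $P_{0\cdot z}$ is a commutative ring with the induced operations. The set $0\cdot P$ is ordered by $0\cdot z\le 0\cdot w$ iff $0\cdot z\cdot w=0\cdot z$. For $0\cdot z\le 0\cdot w$ the transition map $f_{0\cdot w,0\cdot z}:P_{0\cdot w}\to P_{0\cdot z}$ is the ring homomorphism $x\mapsto x+0\cdot z$. *)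

Record PreMeadow := {
  carrier :> Type;
  padd : carrier -> carrier -> carrier;
  popp : carrier -> carrier;
  pmul : carrier -> carrier -> carrier;
  pzero : carrier;
  pone : carrier;
  pm_addA : forall x y z, padd (padd x y) z = padd x (padd y z);
  pm_addC : forall x y, padd x y = padd y x;
  pm_add0 : forall x, padd x pzero = x;
  pm_addN : forall x, padd x (popp x) = pmul pzero x;
  pm_mulA : forall x y z, pmul (pmul x y) z = pmul x (pmul y z);
  pm_mulC : forall x y, pmul x y = pmul y x;
  pm_mul1 : forall x, pmul pone x = x;
  pm_mulD : forall x y z, pmul x (padd y z) = padd (pmul x y) (pmul x z);
  pm_oppK : forall x, popp (popp x) = x;
  pm_0add : forall x y, pmul pzero (padd x y) = pmul (pmul pzero x) y
}.

Arguments padd {p}.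
Arguments popp {p}.
Arguments pmul {p}.
Arguments pzero {p}.
Arguments pone {p}.

Definition in0P {P : PreMeadow} (z : P) : Prop := exists x : P, z = pmul pzero x.

Definition fiber {P : PreMeadow} (z : P) (x : P) : Prop := pmul pzero x = z.

Definition fiber_singleton {P : PreMeadow} (z : P) : Prop :=
  exists y : P, forall x : P, fiber z x <-> x = y.

Definition has_a (P : PreMeadow) : Prop :=
  exists a : P,
    in0P a /\ fiber_singleton a /\
    (forall z : P, in0P z -> fiber_singleton z -> z = a) /\
    (forall x : P, padd x a = a).

(* order on 0.P : 0z <= 0w iff 0.z.w = 0.z *)
Definition zle {P : PreMeadow} (z w : P) : Prop :=
  pmul (pmul pzero z) w = pmul pzero z.

(* transition map f_{0w,0z} : P_{0w} -> P_{0z}, x |-> x + 0z, is surjective *)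
Definition transition_surj {P : PreMeadow} (w z : P) : Prop :=
  forall y : P, fiber (pmul pzero z) y ->
    exists x : P, fiber (pmul pzero w) x /\ padd x (pmul pzero z) = y.


Set Implicit Arguments.

(* The transition maps compose: for 0z <= 0w <= 0u, f_{0u,0z} = f_{0w,0z} o f_{0u,0w},
   so surjectivity of f_{0u,0z} forces surjectivity of f_{0w,0z}.  Since 0 = 0.1 is the
   largest element of 0.P, every f_{0w,0z} factors through P_0 in this way. *)

Section PreMeadowTransitions.

Variable P : PreMeadow.

Lemma pm_mulr1 (x : P) : pmul x pone = x.
Proof. now rewrite pm_mulC, pm_mul1. Qed.

Lemma pm_mul00 : pmul (@pzero P) pzero = pzero.
Proof.
  pose proof (pm_0add P pone pzero) as H.
  now rewrite pm_add0, pm_mulr1 in H.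
Qed.

Lemma pm_mul0_swap (u v : P) : pmul (pmul pzero u) v = pmul (pmul pzero v) u.
Proof. now rewrite !pm_mulA, (pm_mulC P u v). Qed.

Lemma pm_mul0_mul0 (u w : P) :
  pmul (pmul pzero u) (pmul pzero w) = pmul (pmul pzero u) w.
Proof.
  rewrite <- pm_mulA, (pm_mulC P (pmul pzero u) pzero), <- pm_mulA.
  now rewrite pm_mul00.
Qed.

Lemma zle_one (z : P) : zle z pone.
Proof. apply pm_mulr1. Qed.

Lemma add0_zle (z w : P) :
  zle z w -> padd (pmul pzero w) (pmul pzero z) = pmul pzero z.
Proof.
  intros Hzw.
  now rewrite <- pm_mulD, pm_0add, pm_mul0_swap.
Qed.

Lemma fiber_add0 (u w x : P) :
  zle w u -> fiber (pmul pzero u) x -> fiber (pmul pzero w) (padd x (pmul pzero w)).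
Proof.
  unfold fiber. intros Hwu Hx.
  now rewrite pm_0add, Hx, pm_mul0_mul0, pm_mul0_swap.
Qed.

Lemma transition_surj_factor (u w z : P) :
  zle w u -> zle z w -> transition_surj u z -> transition_surj w z.
Proof.
  intros Hwu Hzw Huz y Hy.
  destruct (Huz y Hy) as [x [Hx Hxy]].
  exists (padd x (pmul pzero w)). split.
  - exact (fiber_add0 Hwu Hx).
  - now rewrite pm_addA, add0_zle.
Qed.

End PreMeadowTransitions.

Theorem proposition3p6 (P : PreMeadow) (Ha : has_a P) :
  (forall z w : P, zle z w -> transition_surj w z) <->
  (forall z : P, transition_surj (pone : P) z).
Proof.
  split.
  - intros Hall z. apply Hall, zle_one.
  - intros Htop z w Hzw.
    apply transition_surj_factor with (u := pone).
    + apply zle_one.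
    + exact Hzw.
    + apply Htop.
Qed.
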